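(* Let $U$ and $V$ be real vector spaces with $\dim(U)=\dim(V)=2$, and let $B\colon U\times U\rightarrow V$ be a symmetric bilinear map with associated quadratic map $Q_B\colon U\rightarrow V$, $Q_B(u)=B(u,u)$. Then $Q_B$ is surjective if and only if $B$ is indefinite.
   Context: For a symmetric bilinear map $B\colon U\times U\rightarrow V$ between real vector spaces, and for each $\lambda\in V^*$, let $\lambda Q_B$ denote the real-valued quadratic form on $U$ given by $\lambda Q_B(u)=\lambda\cdot Q_B(u)$. The map $B$ is called indefinite if for each nonzero $\lambda\in V^*$, the quadratic form $\lambda Q_B$ is neither positive-semidefinite nor negative-semidefinite. *)

From HB Require Import structures.
From mathcomp Require Import all_boot all_order all_algebra.
From mathcomp Require Import reals.
Set Implicit Arguments. Unset Strict Implicit. Unset Printing Implicit Defensive.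
Import Order.TTheory GRing.Theory Num.Theory.
Local Open Scope ring_scope.

Section Defs.
Variables (R : realType) (U V : vectType R).

(* B is bilinear (linear in the first argument + symmetric, hence also
   linear in the second argument) and symmetric. *)
Definition symmetric_bilinear (B : U -> U -> V) : Prop :=
  (forall (a : R) (x y z : U), B (a *: x + y) z = a *: B x z + B y z) /\
  (forall x y : U, B x y = B y x).

Definition Q_B (B : U -> U -> V) (u : U) : V := B u u.

Definition lin_functional (lam : V -> R) : Prop :=
  forall (a : R) (x y : V), lam (a *: x + y) = a * lam x + lam y.

Definition psd_form (q : U -> R) : Prop := forall u, 0 <= q u.
Definition nsd_form (q : U -> R) : Prop := forall u, q u <= 0.

Definition indefinite (B : U -> U -> V) : Prop :=
  forall lam : V -> R, lin_functional lam -> (exists v, lam v != 0) ->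
    ~ psd_form (fun u => lam (Q_B B u)) /\ ~ nsd_form (fun u => lam (Q_B B u)).
End Defs.

From HB Require Import structures.
From mathcomp Require Import all_boot all_order all_algebra.
From mathcomp Require Import reals.
From mathcomp Require Import ring lra.
Set Implicit Arguments. Unset Strict Implicit. Unset Printing Implicit Defensive.
Import Order.TTheory GRing.Theory Num.Theory.
Local Open Scope ring_scope.

(* If Q_B is onto, then lam (Q_B u) takes both values lam(w)^2 and -lam(w)^2
   for any w with lam w <> 0.  Conversely, let v <> 0 and pick lam with kernel
   the line R v.  Being indefinite, the binary form lam o Q_B has two
   independent isotropic vectors z1, z2, so Q_B z1 and Q_B z2 lie on R v.  If
   neither were a positive multiple of v, the functional nu = mu + c lam
   (mu v <> 0, c chosen so that nu (B z1 z2) = 0) would satisfy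
   nu (Q_B (x z1 + y z2)) = x^2 nu (Q_B z1) + y^2 nu (Q_B z2) <= 0, against
   indefiniteness; rescaling the good z_i then gives a preimage of v. *)

Section LinearFunctional.
Variables (R : realType) (V : vectType R) (lam : V -> R).
Hypothesis hlam : lin_functional lam.

Lemma lin_functional0 : lam 0 = 0.
Proof.
by have /eqP := hlam 1 0 0; rewrite scale1r addr0 mul1r -subr_eq subrr eq_sym => /eqP.
Qed.

Lemma lin_functionalD x y : lam (x + y) = lam x + lam y.
Proof. by rewrite -{1}[x]scale1r hlam mul1r. Qed.

Lemma lin_functionalZ a x : lam (a *: x) = a * lam x.
Proof. by rewrite -[a *: x]addr0 hlam lin_functional0 addr0. Qed.

End LinearFunctional.

Lemma Q_B_surjective_indefinite (R : realType) (U V : vectType R) (B : U -> U -> V) :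
  (forall v, exists u, Q_B B u = v) -> indefinite B.
Proof.
move=> onto lam hlam [w lam_w].
have sq_gt0 : 0 < lam w ^+ 2 by rewrite exprn_even_gt0.
split=> [psd | nsd].
- have [u Qu] := onto (- lam w *: w).
  by have := psd u; rewrite /= Qu lin_functionalZ // mulNr -expr2 oppr_ge0 leNgt sq_gt0.
- have [u Qu] := onto (lam w *: w).
  by have := nsd u; rewrite /= Qu lin_functionalZ // -expr2 leNgt sq_gt0.
Qed.

Definition binary_form (R : pzRingType) (p r s x y : R) : R :=
  p * x ^+ 2 + 2 * r * x * y + s * y ^+ 2.

Lemma binary_form_disc (R : realFieldType) (p r s : R) :
  ~ (forall x y, 0 <= binary_form p r s x y) ->
  ~ (forall x y, binary_form p r s x y <= 0) ->
  p * s < r ^+ 2.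
Proof.
rewrite /binary_form => npsd nnsd; rewrite ltNge; apply/negP => disc_le0.
have p_form x y : 0 <= p * (p * x ^+ 2 + 2 * r * x * y + s * y ^+ 2).
  have := sqr_ge0 (p * x + r * y).
  have : 0 <= (p * s - r ^+ 2) * y ^+ 2 by rewrite mulr_ge0 ?subr_ge0 ?sqr_ge0.
  nra.
have [p_lt0 | p_gt0 | p0] := ltrgtP p 0.
- by apply: nnsd => x y; have := p_form x y; rewrite nmulr_rge0.
- by apply: npsd => x y; have := p_form x y; rewrite pmulr_rge0.
- have r0 : r = 0 by rewrite p0 mul0r in disc_le0; nra.
  by have [s_ge0 | s_lt0] := lerP 0 s; [apply: npsd | apply: nnsd] => x y; nra.
Qed.

Lemma binary_form_isotropic_pair (R : rcfType) (p r s : R) :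
  p * s < r ^+ 2 -> exists a b c d,
    [/\ a * d - b * c != 0, binary_form p r s a b = 0 & binary_form p r s c d = 0].
Proof.
move=> disc_gt0; rewrite /binary_form.
have [p0 | p_neq0] := eqVneq p 0.
  have r_neq0 : r != 0.
    by apply: contraTneq disc_gt0 => ->; rewrite p0 mul0r expr0n /= ltxx.
  exists 1, 0, (- s), (2 * r); rewrite p0; split; try ring.
  by rewrite mul0r subr0 mul1r mulf_neq0 ?pnatr_eq0.
have [d d_gt0 d_sq] : exists2 d : R, 0 < d & d ^+ 2 = r ^+ 2 - p * s.
  exists (Num.sqrt (r ^+ 2 - p * s)); first by rewrite sqrtr_gt0 subr_gt0.
  by rewrite sqr_sqrtr // subr_ge0 ltW.
(* (d - r) / p and (- d - r) / p are the roots of p t^2 + 2 r t + s. *)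
exists (d - r), p, (- d - r), p; split.
2,3: by transitivity (p * (d ^+ 2 - (r ^+ 2 - p * s))); [ring | rewrite d_sq subrr mulr0].
have -> : (d - r) * p - p * (- d - r) = 2 * d * p by ring.
by rewrite !mulf_eq0 pnatr_eq0 (gt_eqF d_gt0) (negbTE p_neq0).
Qed.

Definition spans2 (R : realType) (U : vectType R) (z1 z2 : U) : Prop :=
  forall u, exists x y, u = x *: z1 + y *: z2.

Lemma spans2_comb (R : realType) (U : vectType R) (f1 f2 : U) (a b c d : R) :
  a * d - b * c != 0 -> spans2 f1 f2 -> spans2 (a *: f1 + b *: f2) (c *: f1 + d *: f2).
Proof.
move=> det_neq0 hf u; have [x [y ->]] := hf u.
exists ((x * d - y * c) / (a * d - b * c)), ((a * y - b * x) / (a * d - b * c)).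
rewrite !scalerDr !scalerA addrACA -!scalerDl.
by congr (_ *: _ + _ *: _); field.
Qed.

Lemma dim2_coords (R : realType) (V : vectType R) (v : V) :
  \dim (fullv : {vspace V}) = 2 -> v != 0 ->
  exists e (lam mu : V -> R), [/\ lin_functional lam, lin_functional mu,
    forall w, w = lam w *: e + mu w *: v & [/\ lam e = 1, lam v = 0 & mu v = 1]].
Proof.
move=> dimV v_neq0.
have [e _ e_notin] : exists2 e, e \in vbasis fullv & e \notin <[v]>%VS.
  apply/hasP; apply: contraT; rewrite -all_predC => /allP /= sub.
  have : (fullv <= <[v]>)%VS.
    by rewrite -(span_basis (vbasisP fullv)); apply/span_subvP => x /sub /negPn.
  by move/dimvS; rewrite dimV dim_vline v_neq0.
pose X := [tuple e; v].
have freeX : free X by rewrite /= free_cons seq1_free span_seq1 e_notin v_neq0.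
have basisX : basis_of fullv X by rewrite basisEfree freeX subvf dimV.
exists e, (coord X ord0), (coord X ord_max); split.
- by move=> k x y; rewrite linearP.
- by move=> k x y; rewrite linearP.
- move=> w; rewrite {1}(coord_basis basisX (memvf w)).
  rewrite big_ord_recl big_ord1 /=.
  by congr (_ + coord X _ w *: _); apply: val_inj.
- split; [exact: (coord_free ord0 ord0 freeX) | exact: (coord_free ord_max ord0 freeX)
         | exact: (coord_free ord_max ord_max freeX)].
Qed.

Lemma dim2_spans2 (R : realType) (U : vectType R) :
  \dim (fullv : {vspace U}) = 2 -> exists f1 f2 : U, spans2 f1 f2.
Proof.
move=> dimU; have u_neq0 : vpick (fullv : {vspace U}) != 0.
  by rewrite vpick0 -dimv_eq0 dimU.
have [e [lam [mu [_ _ dec _]]]] := dim2_coords dimU u_neq0.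
by exists e, (vpick fullv) => u; exists (lam u), (mu u).
Qed.

Section SymmetricBilinear.
Variables (R : realType) (U V : vectType R) (B : U -> U -> V).
Hypothesis hB : symmetric_bilinear B.

Lemma bilinear0l z : B 0 z = 0.
Proof.
by have /eqP := hB.1 1 0 0 z; rewrite !scale1r addr0 -subr_eq subrr eq_sym => /eqP.
Qed.

Lemma bilinearZl k x z : B (k *: x) z = k *: B x z.
Proof. by rewrite -[k *: x]addr0 hB.1 bilinear0l addr0. Qed.

Lemma bilinearDl x y z : B (x + y) z = B x z + B y z.
Proof. by rewrite -{1}[x]scale1r hB.1 scale1r. Qed.

Lemma bilinearZr k x z : B z (k *: x) = k *: B z x.
Proof. by rewrite hB.2 bilinearZl hB.2. Qed.

Lemma bilinearDr x y z : B z (x + y) = B z x + B z y.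
Proof. by rewrite hB.2 bilinearDl !(hB.2 z). Qed.

Lemma Q_B0 : Q_B B 0 = 0.
Proof. exact: bilinear0l. Qed.

Lemma Q_BZ k z : Q_B B (k *: z) = k ^+ 2 *: Q_B B z.
Proof. by rewrite /Q_B bilinearZl bilinearZr scalerA. Qed.

Lemma Q_B_comb x y a b :
  Q_B B (x *: a + y *: b) = x ^+ 2 *: Q_B B a + (2 * x * y) *: B a b + y ^+ 2 *: Q_B B b.
Proof.
rewrite /Q_B !(bilinearDl, bilinearDr, bilinearZl, bilinearZr) (hB.2 b a).
rewrite !scalerDr !scalerA -!expr2 (_ : 2 * x * y = x * y + y * x); last by ring.
by rewrite scalerDl !addrA.
Qed.

Lemma lin_Q_B_comb (lam : V -> R) x y a b : lin_functional lam ->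
  lam (Q_B B (x *: a + y *: b)) =
    binary_form (lam (Q_B B a)) (lam (B a b)) (lam (Q_B B b)) x y.
Proof.
move=> hlam; rewrite Q_B_comb /binary_form.
by rewrite !(lin_functionalD hlam, lin_functionalZ hlam); ring.
Qed.

Lemma Q_B_scaled_onto z m v : 0 < m -> Q_B B z = m *: v -> Q_B B (Num.sqrt m^-1 *: z) = v.
Proof.
move=> m_gt0 Qz; rewrite Q_BZ sqr_sqrtr ?invr_ge0 ?ltW // Qz scalerA.
by rewrite mulVf ?gt_eqF // scale1r.
Qed.

Lemma isotropic_spanning_pair (lam : V -> R) (f1 f2 : U) : lin_functional lam -> spans2 f1 f2 ->
  ~ psd_form (fun u => lam (Q_B B u)) -> ~ nsd_form (fun u => lam (Q_B B u)) ->
  exists z1 z2, [/\ spans2 z1 z2, lam (Q_B B z1) = 0 & lam (Q_B B z2) = 0].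
Proof.
move=> hlam hf npsd nnsd.
have disc : lam (Q_B B f1) * lam (Q_B B f2) < lam (B f1 f2) ^+ 2.
  by apply: binary_form_disc => [psd | nsd]; [apply: npsd | apply: nnsd] => u;
    have [x [y ->]] := hf u; rewrite lin_Q_B_comb.
have [a [b [c [d [det_neq0 iso1 iso2]]]]] := binary_form_isotropic_pair disc.
exists (a *: f1 + b *: f2), (c *: f1 + d *: f2).
by split; rewrite ?lin_Q_B_comb //; apply: spans2_comb.
Qed.

Lemma indefinite_isotropic_pos (lam mu : V -> R) v (z1 z2 : U) :
  indefinite B -> lin_functional lam -> lin_functional mu -> (exists w, lam w != 0) ->
  lam v = 0 -> mu v != 0 -> spans2 z1 z2 ->
  lam (Q_B B z1) = 0 -> lam (Q_B B z2) = 0 ->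
  exists2 z, lam (Q_B B z) = 0 & 0 < mu (Q_B B z).
Proof.
move=> hind hlam hmu lam_nz lam_v mu_v hz iso1 iso2.
have [mu1_gt0 | mu1_le0] := ltrP 0 (mu (Q_B B z1)); first by exists z1.
have [mu2_gt0 | mu2_le0] := ltrP 0 (mu (Q_B B z2)); first by exists z2.
exfalso; have [lamB0 | lamB_neq0] := eqVneq (lam (B z1 z2)) 0.
  apply: (hind lam hlam lam_nz).1 => u; have [x [y ->]] := hz u.
  by rewrite /= lin_Q_B_comb // iso1 iso2 lamB0 /binary_form !(mul0r, mulr0, addr0).
pose nu w := mu w - mu (B z1 z2) / lam (B z1 z2) * lam w.
have hnu : lin_functional nu by move=> k x y; rewrite /nu hlam hmu; ring.
have nu_nz : exists w, nu w != 0 by exists v; rewrite /nu lam_v mulr0 subr0.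
have nuB : nu (B z1 z2) = 0 by rewrite /nu divfK // subrr.
have nuQ z : lam (Q_B B z) = 0 -> nu (Q_B B z) = mu (Q_B B z).
  by move=> iso; rewrite /nu iso mulr0 subr0.
apply: (hind nu hnu nu_nz).2 => u; have [x [y ->]] := hz u.
rewrite /= lin_Q_B_comb // nuB !nuQ // /binary_form.
nra.
Qed.

End SymmetricBilinear.

Theorem proposition1p3 (R : realType) (U V : vectType R)
  (hU : \dim (fullv : {vspace U}) = 2%N) (hV : \dim (fullv : {vspace V}) = 2%N)
  (B : U -> U -> V) (hB : symmetric_bilinear B) :
  (forall v : V, exists u : U, Q_B B u = v) <-> indefinite B.
Proof.
split; first exact: Q_B_surjective_indefinite.
move=> hind v; have [-> | v_neq0] := eqVneq v 0; first by exists 0; apply: Q_B0.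
have [e [lam [mu [hlam hmu dec [lam_e lam_v mu_v]]]]] := dim2_coords hV v_neq0.
have lam_nz : exists w, lam w != 0 by exists e; rewrite lam_e oner_neq0.
have [npsd nnsd] := hind lam hlam lam_nz.
have [f1 [f2 hf]] := dim2_spans2 hU.
have [z1 [z2 [hz iso1 iso2]]] := isotropic_spanning_pair hB hlam hf npsd nnsd.
have mu_v_neq0 : mu v != 0 by rewrite mu_v oner_neq0.
have [z iso mu_gt0] :=
  indefinite_isotropic_pos hB hind hlam hmu lam_nz lam_v mu_v_neq0 hz iso1 iso2.
exists (Num.sqrt (mu (Q_B B z))^-1 *: z); apply: (Q_B_scaled_onto hB mu_gt0).
by rewrite {1}[Q_B B z]dec iso scale0r add0r.
Qed.
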